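(* Let $n\ge2$, $0<\alpha\le1/\sqrt2$, $\nu=\pi/4$, $x_i = -1+\frac{2i}{n-1}$ ($i=0,\dots,n-1$), and define $\bar{\mathbf{X}}\in\mathbb{R}^{n\times n}$ by $\bar{\mathbf{X}}_{ij} = \mathbf{1}\{\|\mathbf{R}_\nu^\top(x_i,x_j)^\top\|_\infty\le\alpha\}$ with $\mathbf{R}_\nu = \begin{bmatrix}\cos\nu&-\sin\nu\\ \sin\nu&\cos\nu\end{bmatrix}$. Then $$\|\bar{\mathbf{X}}\|_F^2\ge n^2\alpha^2 - 5n.$$
   Context: $\|\cdot\|_F$ is the Frobenius norm. *)

From Stdlib Require Import Reals Lra.
Open Scope R_scope.

Definition grid (n i : nat) : R := -1 + 2 * INR i / INR (n - 1).

Definition nu : R := PI / 4.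

(* R_nu^T (a,b)^T, with R_nu = [[cos nu, -sin nu],[sin nu, cos nu]] *)
Definition rotT1 (a b : R) : R := cos nu * a + sin nu * b.
Definition rotT2 (a b : R) : R := - sin nu * a + cos nu * b.

Definition norm_inf2 (u v : R) : R := Rmax (Rabs u) (Rabs v).

Definition Xbar (n : nat) (alpha : R) (i j : nat) : R :=
  if Rle_dec (norm_inf2 (rotT1 (grid n i) (grid n j)) (rotT2 (grid n i) (grid n j))) alpha
  then 1 else 0.

Definition frob_sq (n : nat) (M : nat -> nat -> R) : R :=
  sum_f_R0 (fun i => sum_f_R0 (fun j => (M i j) ^ 2) (n - 1)) (n - 1).

From Stdlib Require Import Reals Lra Psatz.
Open Scope R_scope.

(* With [m = n - 1] and [c = alpha sqrt 2 m / 2 <= m / 2], rotating by [pi/4]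
   turns the square window of [Xbar] into a diamond: [Xbar i j = 1] as soon as
   [|i + j - m| <= c] and [|j - i| <= c].  Row [i] therefore contains at least
   [2c - 1 - |m - 2i|] ones.  Slicing this tent function into unit layers, each
   layer is an interval of rows, and summing the layers gives about
   [2 c^2 = alpha^2 m^2] ones, up to an error linear in [m]. *)

Lemma nat_floor_exists (y : R) : 0 <= y -> exists k : nat, INR k <= y < INR k + 1.
Proof.
  intros Hy. destruct (INR_unbounded y) as [N HN].
  revert y Hy HN. induction N as [|N IH]; intros y Hy HN.
  - simpl in HN. lra.
  - rewrite S_INR in HN. destruct (Rlt_dec y (INR N)).
    + apply IH; lra.
    + exists N. lra.
Qed.

Lemma sum_f_R0_exchange (F : nat -> nat -> R) (N K : nat) :
  sum_f_R0 (fun i => sum_f_R0 (fun k => F i k) K) N =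
  sum_f_R0 (fun k => sum_f_R0 (fun i => F i k) N) K.
Proof.
  induction N as [|N IH].
  - reflexivity.
  - rewrite tech5, IH, <- plus_sum. apply sum_eq; intros; rewrite tech5; reflexivity.
Qed.

Lemma sum_f_R0_ge_interval_count (f : nat -> R) (a b : R) (N : nat) :
  0 <= a -> (forall j, 0 <= f j) -> (forall j, a <= INR j <= b -> 1 <= f j) ->
  Rmin b (INR N + 1) - a - 1 <= sum_f_R0 f N.
Proof.
  intros Ha Hf Hab.
  induction N as [|N IH].
  - pose proof (Rmin_r b (INR 0 + 1)). pose proof (Hf 0%nat). simpl in *. lra.
  - rewrite tech5. pose proof (cond_pos_sum f N Hf). pose proof (Hf (S N)).
    pose proof (Hab (S N)) as HabS. rewrite S_INR in *.
    revert IH. unfold Rmin.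
    destruct (Rle_dec a (INR N + 1)); destruct (Rle_dec (INR N + 1) b);
      [assert (1 <= f (S N)) by (apply HabS; lra)| | |];
      repeat destruct Rle_dec; intros; lra.
Qed.

Lemma sum_unit_steps_le (s : R) (K : nat) :
  sum_f_R0 (fun k => if Rle_dec (INR k + 1) s then 1 else 0) K <= Rmax 0 s.
Proof.
  enough (H : sum_f_R0 (fun k => if Rle_dec (INR k + 1) s then 1 else 0) K
              <= Rmin (INR K + 1) (Rmax 0 s))
    by (eapply Rle_trans; [exact H | apply Rmin_r]).
  induction K as [|K IH].
  - simpl. unfold Rmin, Rmax. repeat destruct Rle_dec; lra.
  - rewrite tech5, S_INR. pose proof (pos_INR K). revert IH.
    unfold Rmin, Rmax. repeat destruct Rle_dec; intros; lra.
Qed.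

Lemma sum_layer_lengths (L : R) (K : nat) :
  sum_f_R0 (fun k => L - INR k - 2) K = (INR K + 1) * (L - 2) - INR K * (INR K + 1) / 2.
Proof.
  induction K as [|K IH].
  - simpl. field.
  - rewrite tech5, IH, S_INR. field.
Qed.

Lemma level_count_ge (m k : nat) (L : R) : L <= INR m ->
  L - INR k - 2 <=
  sum_f_R0 (fun i => if Rle_dec (INR k + 1) (L - Rabs (INR m - 2 * INR i)) then 1 else 0) m.
Proof.
  intros HL. pose proof (pos_INR k).
  set (h := L - INR k - 1).
  eapply Rle_trans;
    [| apply (sum_f_R0_ge_interval_count _ ((INR m - h) / 2) ((INR m + h) / 2))].
  - rewrite Rmin_left; unfold h; lra.
  - unfold h; lra.
  - intros i. destruct Rle_dec; lra.
  - intros i Hi. destruct Rle_dec as [|Hout]; [lra|].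
    exfalso. apply Hout. assert (Rabs (INR m - 2 * INR i) <= h) by (apply Rabs_le; lra).
    unfold h in *. lra.
Qed.

Lemma tent_sum_ge (m : nat) (L : R) : 0 <= L <= INR m ->
  L * (L - 3) / 2 <= sum_f_R0 (fun i => Rmax 0 (L - Rabs (INR m - 2 * INR i))) m.
Proof.
  intros HL.
  pose proof (cond_pos_sum (fun i => Rmax 0 (L - Rabs (INR m - 2 * INR i))) m
                (fun i => Rmax_l _ _)) as Hpos.
  destruct (Rlt_dec L (5 / 2)) as [Hsmall|Hbig]; [nra|].
  destruct (nat_floor_exists (L - 5 / 2)) as [K HK]; [lra|].
  set (step k i := if Rle_dec (INR k + 1) (L - Rabs (INR m - 2 * INR i)) then 1 else 0).
  assert (Hlayers : sum_f_R0 (fun k => sum_f_R0 (fun i => step k i) m) K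
                    <= sum_f_R0 (fun i => Rmax 0 (L - Rabs (INR m - 2 * INR i))) m).
  { rewrite <- sum_f_R0_exchange. apply sum_Rle. intros i _. apply sum_unit_steps_le. }
  assert (Hlevels : sum_f_R0 (fun k => L - INR k - 2) K
                    <= sum_f_R0 (fun k => sum_f_R0 (fun i => step k i) m) K).
  { apply sum_Rle. intros k _. apply level_count_ge. lra. }
  rewrite sum_layer_lengths in Hlevels.
  (* with [x = K + 1], the layers give [((L - 3/2)^2 - (L - 3/2 - x)^2) / 2]
     and [0 <= L - 3/2 - x < 1] *)
  nra.
Qed.

Lemma frob_sq_nonneg (n : nat) (A : nat -> nat -> R) : 0 <= frob_sq n A.
Proof.
  apply cond_pos_sum. intros i. apply cond_pos_sum. intros j. apply pow2_ge_0.
Qed.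

Lemma sqrt2_pos : 0 < sqrt 2.
Proof. apply sqrt_lt_R0. lra. Qed.

Lemma mul_sqrt2_le_1 (alpha : R) : alpha <= 1 / sqrt 2 -> alpha * sqrt 2 <= 1.
Proof.
  intros Halpha. pose proof sqrt2_pos.
  apply (Rmult_le_compat_r (sqrt 2)) in Halpha; [|lra].
  replace (1 / sqrt 2 * sqrt 2) with 1 in Halpha by (field; lra). exact Halpha.
Qed.

Section Grid.

Variables (m : nat) (alpha : R).
Hypothesis Hm : (1 <= m)%nat.

Let M := INR m.
Let c := alpha * sqrt 2 * M / 2.

Let M_pos : 0 < M.
Proof. apply (lt_INR 0). lia. Qed.

Lemma rotT1_grid (i j : nat) :
  rotT1 (grid (S m) i) (grid (S m) j) = 2 * (INR i + INR j - M) / (sqrt 2 * M).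
Proof.
  pose proof sqrt2_pos. pose proof M_pos.
  unfold rotT1, grid, nu. rewrite cos_PI4, sin_PI4.
  replace (S m - 1)%nat with m by lia. unfold M in *. field. lra.
Qed.

Lemma rotT2_grid (i j : nat) :
  rotT2 (grid (S m) i) (grid (S m) j) = 2 * (INR j - INR i) / (sqrt 2 * M).
Proof.
  pose proof sqrt2_pos. pose proof M_pos.
  unfold rotT2, grid, nu. rewrite cos_PI4, sin_PI4.
  replace (S m - 1)%nat with m by lia. unfold M in *. field. lra.
Qed.

Lemma Xbar_window (i j : nat) :
  Rabs (INR i + INR j - M) <= c -> Rabs (INR j - INR i) <= c -> Xbar (S m) alpha i j = 1.
Proof.
  intros Hsum Hdiff.
  pose proof sqrt2_pos. pose proof M_pos.
  assert (Hscale : forall u, Rabs u <= c -> Rabs (2 * u / (sqrt 2 * M)) <= alpha).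
  { intros u Hu.
    assert (Hk : 0 < 2 / (sqrt 2 * M)) by (apply Rdiv_lt_0_compat; nra).
    replace (2 * u / (sqrt 2 * M)) with (u * (2 / (sqrt 2 * M))) by (field; lra).
    rewrite Rabs_mult, (Rabs_right (2 / (sqrt 2 * M))) by lra.
    replace alpha with (c * (2 / (sqrt 2 * M))) by (unfold c; field; lra).
    apply Rmult_le_compat_r; lra. }
  unfold Xbar. destruct Rle_dec as [|Hout]; [reflexivity|].
  exfalso. apply Hout. unfold norm_inf2. rewrite rotT1_grid, rotT2_grid.
  apply Rmax_lub; apply Hscale; assumption.
Qed.

Hypothesis Hc : c <= M / 2.

Lemma row_sum_ge (i : nat) : (i <= m)%nat ->
  Rmax 0 (2 * c - 1 - Rabs (M - 2 * INR i)) <= sum_f_R0 (fun j => Xbar (S m) alpha i j ^ 2) m.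
Proof.
  intros Hi. assert (HiM : INR i <= M) by (apply le_INR; exact Hi).
  pose proof (pos_INR i).
  apply Rmax_lub; [apply cond_pos_sum; intros; apply pow2_ge_0|].
  set (a := Rmax (INR i) (M - INR i) - c).
  set (b := Rmin (INR i) (M - INR i) + c).
  assert (Hab : 0 <= a /\ b <= M /\ b - a = 2 * c - Rabs (M - 2 * INR i)).
  { unfold a, b, Rmax, Rmin, Rabs. destruct Rle_dec; destruct Rcase_abs; lra. }
  eapply Rle_trans; [| apply (sum_f_R0_ge_interval_count _ a b)].
  - rewrite Rmin_left; fold M; lra.
  - lra.
  - intros; apply pow2_ge_0.
  - intros j Hj. rewrite Xbar_window; [lra| |]; apply Rabs_le; revert Hj;
      unfold a, b, Rmax, Rmin; destruct Rle_dec; intros; lra.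
Qed.

Lemma frob_sq_ge_quadratic :
  0 <= 2 * c - 1 -> (2 * c - 1) * (2 * c - 1 - 3) / 2 <= frob_sq (S m) (Xbar (S m) alpha).
Proof.
  intros HL.
  eapply Rle_trans; [apply (tent_sum_ge m); fold M; lra|].
  unfold frob_sq. replace (S m - 1)%nat with m by lia.
  apply sum_Rle. intros i Hi. apply row_sum_ge. exact Hi.
Qed.

End Grid.

Theorem mainTheorem7 (n : nat) (alpha : R) :
  (2 <= n)%nat -> 0 < alpha -> alpha <= 1 / sqrt 2 ->
  frob_sq n (Xbar n alpha) >= INR n ^ 2 * alpha ^ 2 - 5 * INR n.
Proof.
  intros Hn Ha Halpha.
  destruct n as [|m]; [lia|].
  assert (Hm : (1 <= m)%nat) by lia.
  pose proof (le_INR 1 m Hm) as HM. simpl in HM.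
  pose proof (frob_sq_ge_quadratic m alpha Hm) as Hfrob.
  pose proof (frob_sq_nonneg (S m) (Xbar (S m) alpha)).
  rewrite S_INR. set (M := INR m) in *.
  set (c := alpha * sqrt 2 * M / 2) in *.
  assert (Hs : 0 <= alpha * sqrt 2 <= 1).
  { split; [pose proof sqrt2_pos; nra | apply mul_sqrt2_le_1; exact Halpha]. }
  assert (Hs2 : (alpha * sqrt 2) ^ 2 = 2 * alpha ^ 2).
  { replace ((alpha * sqrt 2) ^ 2) with (alpha ^ 2 * (sqrt 2 * sqrt 2)) by ring.
    rewrite sqrt_sqrt by lra. ring. }
  assert (Hc : 0 <= c <= M / 2) by (unfold c; split; nra).
  assert (Htarget : (M + 1) ^ 2 * alpha ^ 2 - 5 * (M + 1) <= 2 * c * c - 4 * M - 9 / 2).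
  { replace (2 * c * c) with ((alpha * sqrt 2) ^ 2 * M ^ 2 / 2) by (unfold c; field).
    assert (Ha2 : 2 * alpha ^ 2 <= 1) by (rewrite <- Hs2; nra).
    assert (0 <= (1 - 2 * alpha ^ 2) * (2 * M + 1)) by (apply Rmult_le_pos; lra).
    rewrite Hs2. nra. }
  specialize (Hfrob (proj2 Hc)).
  apply Rle_ge.
  destruct (Rlt_dec (2 * c - 1) 0) as [Hsmall|Hbig]; [nra|].
  specialize (Hfrob (Rnot_lt_le _ _ Hbig)). nra.
Qed.
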